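(* Let $\lambda$ be a partition of $n$ and let $\mathcal{G}$ be the generating set of $\mathcal{I}_\lambda$ consisting of: $e_1(n),\dots,e_{\ell(\lambda)-1}(n)$; the sets $e_{b_k}(n-k)$ for $1\le k\le t$ (where the set $e_{b_1}(n-1)$ may equivalently be taken to be $\{x_1^{b_1},\dots,x_n^{b_1}\}$); and, if $s>t$, the set $e_{n-s}(n-s)$ of all square-free monomials of degree $n-s$. Let $k\ge2$ be a column index for which $b_k$ is defined (i.e. $2\le k\le t$, or $k=s>t$ with $b_s:=n-s$), and suppose the $(k-1)$-st column of the Young diagram of $\lambda$ has height $\lambda'_k>1$. Writing $S=\{x_1,\dots,x_n\}$ and $S_{i_1,\dots,i_k}=S\setminus\{x_{i_1},\dots,x_{i_k}\}$, the set obtained from $\mathcal{G}$ by removing the $\binom{n-1}{k-1}+1$ elements $$e_{b_k}(S_{1,i_2,\dots,i_k})\quad(1<i_2<\cdots<i_k\le n)\qquad\text{and}\qquad e_{b_k}(S_{2,3,\dots,k+1})$$ still generates $\mathcal{I}_\lambda$.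
   Context: $k$ is a field of characteristic $0$ and $R=k[x_1,\dots,x_n]$. For a set $S$ of variables, $e_r(S)$ is the $r$-th elementary symmetric polynomial in the variables of $S$ ($e_0=1$, $e_r(S)=0$ if $r>|S|$), and for $1\le m\le n$, $e_r(m)=\{e_r(S): S\subseteq\{x_1,\dots,x_n\},\ |S|=m\}$. A partition $\lambda$ of $n$ has parts $\lambda_1\ge\lambda_2\ge\cdots$ (zero beyond its length $\ell(\lambda)$) and conjugate $\lambda'_i=\#\{j:\lambda_j\ge i\}$. Its Young diagram has rows counted from the bottom (bottom row of length $\lambda_1$), left-justified; columns are numbered $0,\dots,\lambda_1-1$ from the left, column $c$ having height $\lambda'_{c+1}$. Set $t=\lambda_2-1$, $s=\lambda_1-1$, and $b_k=\lambda'_1+\cdots+\lambda'_k-k+1$ for $1\le k\le t$. For $1\le m\le n$ let $\delta_m(\lambda)=\lambda'_n+\cdots+\lambda'_{n-m+1}$ ($\lambda'_i=0$ for $i>\lambda_1$). The De Concini–Procesi ideal $\mathcal{I}_\lambda\subseteq R$ is the ideal generated by all elements of the sets $e_r(m)$ with $1\le m\le n$ and $m\ge r>m-\delta_m(\lambda)$. *)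

From HB Require Import structures.
From mathcomp Require Import all_boot all_order all_algebra.
From mathcomp Require Import mpoly.
Unset Printing Implicit Defensive.
Import GRing.Theory.
Local Open Scope ring_scope.

(* Variables x_1..x_n are 'X_0 .. 'X_(n-1) in {mpoly F[n]}. *)

Definition esym (F : fieldType) (n : nat) (S : {set 'I_n}) (r : nat) : {mpoly F[n]} :=
  \sum_(T : {set 'I_n} | (T \subset S) && (#|T| == r)%N) \prod_(i in T) 'X_i.

Definition in_ideal (F : fieldType) (n : nat) (G : {mpoly F[n]} -> Prop)
  (p : {mpoly F[n]}) : Prop :=
  exists gs : seq ({mpoly F[n]} * {mpoly F[n]}),
    (forall c, c \in gs -> G c.2) /\ p = \sum_(c <- gs) c.1 * c.2.

Definition is_partition (la : seq nat) (n : nat) : bool :=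
  [&& sorted geq la, all (fun x => 0 < x)%N la & sumn la == n].

Definition conjp (la : seq nat) (i : nat) : nat := count (fun j => i <= j)%N la.

Definition delta (la : seq nat) (n m : nat) : nat :=
  (\sum_((n - m).+1 <= i < n.+1) conjp la i)%N.

Definition t_of (la : seq nat) : nat := (nth 0 la 1 - 1)%N.
Definition s_of (la : seq nat) : nat := (nth 0 la 0 - 1)%N.
Definition b_of (la : seq nat) (k : nat) : nat :=
  ((\sum_(1 <= i < k.+1) conjp la i).+1 - k)%N.

(* the defining generators of the De Concini--Procesi ideal I_lambda *)
Definition DPgen (F : fieldType) (n : nat) (la : seq nat) (p : {mpoly F[n]}) : Prop :=
  exists (m r : nat) (S : {set 'I_n}),
    [/\ (1 <= m <= n)%N, #|S| = m, (r <= m)%N, (m < r + delta la n m)%N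
      & p = esym F n S r].

(* The generating family G, with a selector [keep j S] deciding whether the
   member e_{b_j}(S) of the j-th family (j = s for the square-free monomials
   family e_{n-s}(n-s)) is kept. *)
Definition Gfam (F : fieldType) (n : nat) (la : seq nat)
  (keep : nat -> {set 'I_n} -> bool) (p : {mpoly F[n]}) : Prop :=
  (exists r, (1 <= r < size la)%N /\ p = esym F n [set: 'I_n] r)
  \/ (exists j (S : {set 'I_n}),
        [/\ (1 <= j <= t_of la)%N, #|S| = (n - j)%N, keep j S
          & p = esym F n S (b_of la j)])
  \/ ((t_of la < s_of la)%N /\
      exists S : {set 'I_n},
        [/\ #|S| = (n - s_of la)%N, keep (s_of la) S
          & p = esym F n S (n - s_of la)]).

(* S = S_{i_1,...,i_k} is one of the removed index sets: its complement T has
   k elements and either contains x_1 (index 0), or is {x_2,...,x_{k+1}}. *)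
Definition removed (n k : nat) (S : {set 'I_n}) : bool :=
  (#|~: S| == k) &&
  ([exists i in ~: S, val i == 0%N]
   || (~: S == [set i : 'I_n | (1 <= val i <= k)%N])).

Definition Gred (F : fieldType) (n : nat) (la : seq nat) (k : nat) :=
  Gfam F n la (fun j S => ~~ ((j == k) && removed n k S)).

(* Let J be the ideal generated by the reduced family and say that level (j, r) holds when
   e_r(S) lies in J for every S with |S| = n - j.  For |S| = m the De Concini-Procesi condition
   r > m - delta_m(lambda) is exactly r >= b_(n-m), so it suffices to reach level (j, r) for all
   r >= b_j, by induction on j.  Within a level, e_(r+1)(S) = e_(r+1)(S + x) - x e_r(S) climbs
   in r once the first generator of the column is known; in characteristic 0 the identities
   sum_(x in S) e_r(S - x) = (|S| - r) e_r(S) and sum_(x in S) x e_r(S - x) = (r + 1) e_(r+1)(S)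
   move down a level.  Generators are missing only in column k.  Write its members as
   f(A) = e_(b_k)({x_1, ..., x_n} - A) with |A| = k; level k - 1 puts sum_(z notin B) f(B + z)
   in J whenever |B| = k - 1, and the removed members are f(A) with x_1 in A and
   f(A_0), A_0 = {x_2, ..., x_(k+1)}.  For x_1 in A the relation for B = A - x_1 isolates f(A)
   up to f(A_0), and f(A_0) is half of a combination of the relations for B = A_0 - x_2,
   B = A_0 - x_3 and B = x_1 + (A_0 - {x_2, x_3}). *)

From Pilot Require Import Defs.
From HB Require Import structures.
From mathcomp Require Import all_boot all_order all_algebra.
From mathcomp Require Import mpoly zify ring.
Set Implicit Arguments. Unset Strict Implicit. Unset Printing Implicit Defensive.
Import GRing.Theory.
Local Open Scope ring_scope.

Section InIdeal.
Variables (F : fieldType) (n : nat).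
Implicit Types (G H : {mpoly F[n]} -> Prop) (p q : {mpoly F[n]}).
Local Notation in_ideal := (in_ideal F n).

Lemma in_ideal0 G : in_ideal G 0.
Proof. by exists [::]; split => //; rewrite big_nil. Qed.

Lemma in_ideal_gen G p : G p -> in_ideal G p.
Proof.
move=> Gp; exists [:: (1, p)]; split; first by move=> c; rewrite inE => /eqP ->.
by rewrite big_seq1 mul1r.
Qed.

Lemma in_idealD G p q : in_ideal G p -> in_ideal G q -> in_ideal G (p + q).
Proof.
move=> [s1 [G1 ->]] [s2 [G2 ->]]; exists (s1 ++ s2); split; last by rewrite big_cat.
by move=> c; rewrite mem_cat => /orP[/G1|/G2].
Qed.

Lemma in_idealMl G a p : in_ideal G p -> in_ideal G (a * p).
Proof.
move=> [s [Gs ->]]; exists [seq (a * c.1, c.2) | c <- s]; split.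
  by move=> c /mapP[d /Gs Gd ->].
by rewrite big_map mulr_sumr; apply: eq_bigr => c _; rewrite mulrA.
Qed.

Lemma in_idealB G p q : in_ideal G p -> in_ideal G q -> in_ideal G (p - q).
Proof. by move=> Gp Gq; rewrite -mulN1r; apply/in_idealD/in_idealMl. Qed.

Lemma in_ideal_sum G (I : finType) (P : pred I) (f : I -> {mpoly F[n]}) :
  (forall i, P i -> in_ideal G (f i)) -> in_ideal G (\sum_(i | P i) f i).
Proof. by move=> Gf; apply: big_ind => //; [apply: in_ideal0 | apply: in_idealD]. Qed.

Lemma in_ideal_sub G H p :
  (forall g, G g -> in_ideal H g) -> in_ideal G p -> in_ideal H p.
Proof.
move=> GH [s [Gs ->]]; elim: s Gs => [|c s IHs] Gs; first by rewrite big_nil; apply: in_ideal0.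
rewrite big_cons; apply: in_idealD; first by apply/in_idealMl/GH/Gs; rewrite inE eqxx.
by apply: IHs => d ds; apply: Gs; rewrite inE ds orbT.
Qed.

Lemma in_idealMnK G p m : [pchar F] =i pred0 -> (0 < m)%N ->
  in_ideal G (p *+ m) -> in_ideal G p.
Proof.
move=> charF m_gt0 Gpm.
have -> : p = ((m%:R : F)^-1)%:MP * (p *+ m).
  rewrite mul_mpolyC -scaler_nat scalerA mulVf ?scale1r //.
  by move/pcharf0P: charF => ->; rewrite -lt0n.
exact: in_idealMl.
Qed.

Lemma in_ideal_bigD1 G (I : finType) (P : pred I) (f : I -> {mpoly F[n]}) w :
  P w -> in_ideal G (\sum_(i | P i) f i) ->
  (forall i, P i -> i != w -> in_ideal G (f i)) -> in_ideal G (f w).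
Proof.
move=> Pw Gsum Gf; rewrite (bigD1 w) //= in Gsum.
rewrite -[f w](addrK (\sum_(i | P i && (i != w)) f i)).
by apply: in_idealB => //; apply: in_ideal_sum => i /andP[]; apply: Gf.
Qed.

Lemma in_ideal_bigD2 G (I : finType) (P : pred I) (f : I -> {mpoly F[n]}) w1 w2 :
  P w1 -> P w2 -> w1 != w2 -> in_ideal G (\sum_(i | P i) f i) ->
  (forall i, P i -> i != w1 -> i != w2 -> in_ideal G (f i)) ->
  in_ideal G (f w1 + f w2).
Proof.
move=> Pw1 Pw2 w12 Gsum Gf; rewrite (bigD1 w1) //= (bigD1 w2) /= in Gsum; last first.
  by rewrite Pw2 eq_sym.
set R := \sum_(i | _) _ in Gsum.
have -> : f w1 + f w2 = f w1 + (f w2 + R) - R by rewrite addrA addrK.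
apply: in_idealB => //; apply: in_ideal_sum => i /andP[/andP[Pi iw1] iw2].
exact: Gf.
Qed.

End InIdeal.

Section ElementarySymmetric.
Variables (F : fieldType) (n : nat).
Implicit Types (S T : {set 'I_n}).
Local Notation e := (Defs.esym F n).

Lemma esym_card_lt S r : (#|S| < r)%N -> e S r = 0.
Proof.
move=> lt_S_r; apply: big1 => T /andP[sub_TS /eqP cT].
by move: (subset_leq_card sub_TS); rewrite cT leqNgt lt_S_r.
Qed.

Lemma esymD1 S x r : x \in S ->
  e S r.+1 = e (S :\ x) r.+1 + 'X_x * e (S :\ x) r.
Proof.
move=> xS; rewrite /Defs.esym (bigID (fun T => x \in T)) /= addrC; congr (_ + _).
  by apply: eq_bigl => T; rewrite subsetD1 andbAC.
rewrite mulr_sumr (reindex_onto (fun T => x |: T) (fun T => T :\ x)) /=; last first.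
  by move=> T /andP[_ xT]; rewrite setD1K.
apply: eq_big => [T|T /andP[_ /eqP <-]]; last by rewrite big_setU1 //= !inE eqxx.
have [xT|xT] := boolP (x \in T).
  have -> : ((x |: T) :\ x == T) = false.
    by apply/negbTE/eqP => eT; move: xT; rewrite -eT !inE eqxx.
  by rewrite andbF subsetD1 xT andbF.
rewrite setU1K // eqxx setU11 !andbT subsetD1 xT andbT cardsU1 xT add1n eqSS.
by rewrite subUset sub1set xS.
Qed.

Lemma sum_esymD1 S r :
  \sum_(x in S) e (S :\ x) r = e S r *+ (#|S| - r).
Proof.
rewrite /Defs.esym.
transitivity (\sum_(x in S) \sum_(T : {set 'I_n} | (T \subset S) && (#|T| == r))
   (if x \notin T then \prod_(i in T) 'X_i else 0 : {mpoly F[n]})).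
  apply: eq_bigr => x xS; rewrite [RHS]big_mkcond [LHS]big_mkcond /=.
  apply: eq_bigr => T; rewrite subsetD1.
  by case: (T \subset S); case: (x \in T); case: (#|T| == r).
rewrite exchange_big /= -sumrMnl; apply: eq_bigr => T /andP[sub_TS /eqP cT].
rewrite -big_mkcondr /= sumr_const -cT -(cardsDS sub_TS); congr (_ *+ _).
by apply: eq_card => y; rewrite !inE andbC.
Qed.

Lemma sum_X_esymD1 S r :
  \sum_(x in S) 'X_x * e (S :\ x) r = e S r.+1 *+ r.+1.
Proof.
have eX x : x \in S -> 'X_x * e (S :\ x) r = e S r.+1 - e (S :\ x) r.+1.
  by move=> xS; rewrite (esymD1 r xS) addrAC subrr add0r.
rewrite (eq_bigr _ eX) sumrB sum_esymD1 sumr_const.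
have [le_rS|lt_Sr] := leqP r.+1 #|S|; first by rewrite -mulrnBr ?leq_subr ?subKn.
by rewrite esym_card_lt // !mul0rn subrr.
Qed.

End ElementarySymmetric.

Lemma cardsC_ord n (A : {set 'I_n}) : #|~: A| = (n - #|A|)%N.
Proof. by rewrite cardsCs setCK card_ord. Qed.

Section Levels.
Variables (F : fieldType) (n : nat) (G : {mpoly F[n]} -> Prop).
Hypothesis charF : [pchar F] =i pred0.
Local Notation e := (Defs.esym F n).
Local Notation in_ideal := (in_ideal F n G).

Definition esym_level j r :=
  forall S : {set 'I_n}, #|S| = (n - j)%N -> in_ideal (e S r).

Lemma esym_levelS j r : (j < n)%N ->
  esym_level j r.+1 -> esym_level j.+1 r -> esym_level j.+1 r.+1.
Proof.
move=> lt_jn Lj Lj1 T cT.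
have [x] : exists x, x \in ~: T by apply/card_gt0P; rewrite cardsC_ord cT; lia.
rewrite inE => xT.
have := esymD1 F r (setU11 x T); rewrite setU1K // => eD1.
rewrite -[e T r.+1](addrK ('X_x * e T r)) -eD1.
apply: in_idealB; last by apply/in_idealMl/Lj1.
by apply: Lj; rewrite cardsU1 xT cT; lia.
Qed.

Lemma esym_level_succ_ge j a c : (j < n)%N ->
  (forall r, (a <= r)%N -> esym_level j r) -> esym_level j.+1 c -> (a <= c.+1)%N ->
  forall r, (c <= r)%N -> esym_level j.+1 r.
Proof.
move=> lt_jn Lj Lc le_ac r /subnK <-; elim: (r - c)%N => [|d IHd] //.
by rewrite addSn; apply: esym_levelS => //; apply: Lj; lia.
Qed.

Lemma esym_level_predS j r : (0 < j <= n)%N ->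
  esym_level j r -> esym_level j.-1 r.+1.
Proof.
move=> j_bound Lj S cS; apply: (@in_idealMnK _ _ _ _ r.+1 charF) => //.
rewrite -sum_X_esymD1; apply: in_ideal_sum => x xS; apply/in_idealMl/Lj.
by move: (cardsD1 x S); rewrite xS cS; lia.
Qed.

Lemma esym_level_pred j r : (0 < j <= n)%N -> (r <= n - j)%N ->
  esym_level j r -> esym_level j.-1 r.
Proof.
move=> j_bound le_r Lj S cS; apply: (@in_idealMnK _ _ _ _ (#|S| - r) charF).
  by rewrite cS; lia.
rewrite -sum_esymD1; apply: in_ideal_sum => x xS; apply: Lj.
by move: (cardsD1 x S); rewrite xS cS; lia.
Qed.

Lemma esym_level_down s r : (s <= n)%N -> (r <= n - s)%N ->
  esym_level s r -> forall j, (j <= s)%N -> esym_level j r.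
Proof.
elim: s => [|s IHs] le_sn le_r Ls j le_js; first by move: le_js; rewrite leqn0 => /eqP ->.
have [->|lt_js] := eqVneq j s.+1; first by [].
apply: IHs; [lia | lia | | lia].
exact: (esym_level_pred (j := s.+1)).
Qed.

Lemma esym_level_top l : (0 < l < n)%N ->
  (forall r, (1 <= r < l)%N -> in_ideal (e [set: 'I_n] r)) -> esym_level 1 l ->
  forall r, (1 <= r)%N -> esym_level 0 r.
Proof.
move=> l_bound Lsmall L1l.
have Lbig r : (l <= r)%N -> esym_level 0 r /\ esym_level 1 r.
  move=> /subnK <-; elim: (r - l)%N => [|d [_ L1]].
    rewrite add0n; split=> //.
    by apply: (esym_level_pred (j := 1)) => //; lia.
  have L0 : esym_level 0 (d + l).+1 by apply: (esym_level_predS (j := 1)) => //; lia.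
  by split; rewrite addSn //; apply: esym_levelS => //; lia.
move=> r r_gt0; have [lt_rl|le_lr] := ltnP r l; last by case: (Lbig r le_lr).
move=> S cS; have -> : S = [set: 'I_n].
  by apply/eqP; rewrite eqEcard subsetT cardsT card_ord cS subn0 leqnn.
by apply: Lsmall; rewrite r_gt0.
Qed.

End Levels.

Section Recovery.
Variables (F : fieldType) (n : nat) (G : {mpoly F[n]} -> Prop) (k b : nat).
Hypotheses (charF : [pchar F] =i pred0) (k_ge2 : (2 <= k)%N) (lt_kn : (k < n)%N).
Local Notation e := (Defs.esym F n).
Local Notation in_ideal := (in_ideal F n G).
Hypothesis level_pred : esym_level G k.-1 b.
Hypothesis kept :
  forall S : {set 'I_n}, #|S| = (n - k)%N -> ~~ removed n k S -> in_ideal (e S b).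

(* [i0], [i1], [i2] are x_1, x_2, x_3 and [A0] is {x_2, ..., x_(k+1)}. *)
Let gen (A : {set 'I_n}) := e (~: A) b.

Let i0 : 'I_n := Ordinal (ltn_trans (ltnW k_ge2) lt_kn).
Let i1 : 'I_n := Ordinal (ltn_trans k_ge2 lt_kn).
Let i2 : 'I_n := Ordinal (leq_ltn_trans k_ge2 lt_kn).
Let A0 : {set 'I_n} := [set i : 'I_n | (1 <= val i <= k)%N].

Let card_A0 : #|A0| = k.
Proof.
rewrite /A0; elim: k lt_kn => [|j IHj] lt_jn.
  by apply/eqP; rewrite cards_eq0; apply/eqP/setP => i; rewrite !inE; case: (val i).
have -> : [set i : 'I_n | (1 <= val i <= j.+1)%N] =
    Ordinal lt_jn |: [set i : 'I_n | (1 <= val i <= j)%N].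
  apply/setP => -[i lt_in]; rewrite !inE -(inj_eq val_inj) /=.
  by have [->|/eqP ne] := eqVneq i j.+1; [rewrite ltnSn | apply/idP/idP; lia].
by rewrite cardsU1 IHj ?inE /=; lia.
Qed.

Let i0_A0 : i0 \notin A0. Proof. by rewrite inE. Qed.
Let i1_A0 : i1 \in A0. Proof. by rewrite inE /=; lia. Qed.
Let i2_A0 : i2 \in A0. Proof. by rewrite inE /=; lia. Qed.

Let gen_relation (B : {set 'I_n}) : #|B| = k.-1 ->
  in_ideal (\sum_(z in ~: B) gen (z |: B)).
Proof.
move=> cB; have := sum_esymD1 F (~: B) b.
have -> : \sum_(x in ~: B) e (~: B :\ x) b = \sum_(z in ~: B) gen (z |: B).
  apply: eq_bigr => z _; rewrite /gen; congr (e _ b).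
  by apply/setP => y; rewrite !inE negb_or andbC.
by move=> ->; rewrite -mulr_natl; apply/in_idealMl/level_pred; rewrite cardsC_ord cB.
Qed.

Let gen_kept (A : {set 'I_n}) : #|A| = k -> i0 \notin A -> A != A0 -> in_ideal (gen A).
Proof.
move=> cA i0A AA0; apply: kept; first by rewrite cardsC_ord cA.
rewrite /removed setCK cA eqxx negb_or AA0 andbT.
apply/existsP => -[i /andP[iA /eqP i_0]].
by move: iA; rewrite (_ : i = i0) ?(negbTE i0A) //; apply: val_inj.
Qed.

Let gen_i0_notsub (D : {set 'I_n}) : #|D| = k.-1 -> i0 \notin D -> ~~ (D \subset A0) ->
  in_ideal (gen (i0 |: D)).
Proof.
move=> cD i0D DA0; apply: (in_ideal_bigD1 _ (gen_relation cD)); first by rewrite inE.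
move=> z; rewrite inE => zD zi0; apply: gen_kept.
- by rewrite cardsU1 zD cD; lia.
- by rewrite in_setU1 negb_or eq_sym zi0.
- by apply: contraNneq DA0 => <-; apply: subsetUr.
Qed.

Let gen_i0_pair y : y \in A0 -> in_ideal (gen (i0 |: (A0 :\ y)) + gen A0).
Proof.
move=> yA0; have cA0y : #|A0 :\ y| = k.-1 by move: (cardsD1 y A0); rewrite yA0 card_A0; lia.
rewrite -{2}(setD1K yA0); apply: (in_ideal_bigD2 _ _ _ (gen_relation cA0y)).
- by rewrite in_setC in_setD1 (negbTE i0_A0) andbF.
- by rewrite in_setC in_setD1 eqxx.
- by apply: contraNneq i0_A0 => ->.
move=> z; rewrite in_setC => zA0y zi0 zy.
have zA0 : z \notin A0 by move: zA0y; rewrite in_setD1 zy.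
apply: gen_kept.
- by rewrite cardsU1 zA0y cA0y; lia.
- by rewrite in_setU1 in_setD1 (negbTE i0_A0) andbF orbF eq_sym.
- by apply: contraNneq zA0 => <-; rewrite setU11.
Qed.

Let gen_A0 : in_ideal (gen A0).
Proof.
set C := A0 :\: [set i1; i2].
have i12 : i1 != i2 by rewrite -(inj_eq val_inj).
have cC : #|C| = (k - 2)%N.
  by rewrite cardsDS ?cards2 ?i12 ?card_A0 // subUset !sub1set i1_A0 i2_A0.
have i0C : i0 \notin C by rewrite inE (negbTE i0_A0) andbF.
have pair_C : in_ideal (gen (i1 |: (i0 |: C)) + gen (i2 |: (i0 |: C))).
  apply: (in_ideal_bigD2 _ _ i12 (gen_relation (B := i0 |: C) _)).
  - by rewrite !inE eqxx.
  - by rewrite !inE eqxx orbT.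
  - by rewrite cardsU1 i0C cC; lia.
  move=> z; rewrite in_setC in_setU1 negb_or => /andP[zi0 zC] zi1 zi2.
  have zA0 : z \notin A0 by move: zC; rewrite in_setD in_set2 (negbTE zi1) (negbTE zi2).
  rewrite setUCA; apply: gen_i0_notsub.
  - by rewrite cardsU1 zC cC; lia.
  - by rewrite in_setU1 negb_or eq_sym zi0.
  - by apply: contraNN zA0 => /subsetP; apply; rewrite setU11.
have C_i1 : i1 |: (i0 |: C) = i0 |: (A0 :\ i2).
  apply/setP => x; rewrite /C !in_setU1 in_setD in_set2 in_setD1.
  by have [->|] := eqVneq x i1; rewrite /= ?i1_A0.
have C_i2 : i2 |: (i0 |: C) = i0 |: (A0 :\ i1).
  apply/setP => x; rewrite /C !in_setU1 in_setD in_set2 in_setD1.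
  by have [->|] := eqVneq x i2; rewrite /= ?i2_A0 ?orbF.
rewrite C_i1 C_i2 in pair_C.
apply: (@in_idealMnK _ _ _ _ 2 charF) => //.
have := in_idealB (in_idealD (gen_i0_pair i2_A0) (gen_i0_pair i1_A0)) pair_C.
by congr in_ideal; rewrite mulr2n; ring.
Qed.

Lemma esym_level_recover : esym_level G k b.
Proof.
move=> S cS; rewrite -[S]setCK -/(gen _).
have cA : #|~: S| = k by rewrite cardsC_ord cS; lia.
move: (~: S) cA => A cA.
have [i0A|i0A] := boolP (i0 \in A); last first.
  by have [->|AA0] := eqVneq A A0; [apply: gen_A0 | apply: gen_kept].
have cAi0 : #|A :\ i0| = k.-1 by move: (cardsD1 i0 A); rewrite i0A cA => ->.
rewrite -(setD1K i0A); apply: (in_ideal_bigD1 _ (gen_relation cAi0)); first by rewrite !inE eqxx.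
move=> z; rewrite in_setC => zA zi0.
have [->|zA_A0] := eqVneq (z |: (A :\ i0)) A0; first exact: gen_A0.
apply: gen_kept => //; first by rewrite cardsU1 zA cAi0; lia.
by rewrite in_setU1 in_setD1 eqxx /= orbF eq_sym.
Qed.

End Recovery.

Section Partitions.
Local Open Scope nat_scope.

Definition ncells (la : seq nat) (j : nat) : nat := \sum_(p <- la) minn p j.

Lemma ncells_cons a la j : ncells (a :: la) j = minn a j + ncells la j.
Proof. by rewrite /ncells big_cons. Qed.

Lemma ncellsS la j : ncells la j.+1 = ncells la j + conjp la j.+1.
Proof.
elim: la => [|a la IHla]; first by rewrite /ncells !big_nil.
by rewrite !ncells_cons IHla /conjp /=; case: (ltnP j a) => /= ?; lia.
Qed.

Lemma sum_conjp la j : \sum_(1 <= i < j.+1) conjp la i = ncells la j.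
Proof.
elim: j => [|j IHj]; last by rewrite big_nat_recr //= IHj ncellsS.
by rewrite big_geq // /ncells big1_seq // => p _; rewrite minn0.
Qed.

Lemma b_ofE la j : b_of la j = (ncells la j).+1 - j.
Proof. by rewrite /b_of sum_conjp. Qed.

Lemma b_of0 la : b_of la 0 = 1.
Proof. by rewrite /b_of big_geq. Qed.

Lemma b_of_succ la j : b_of la j <= (b_of la j.+1).+1.
Proof. by rewrite !b_ofE ncellsS; lia. Qed.

Lemma ncells_le_sumn la j : ncells la j <= sumn la.
Proof.
by elim: la => [|a la IHla]; rewrite /= ?ncells_cons; [rewrite /ncells big_nil | lia].
Qed.

Lemma ncells_sumn la j : all (fun p => p <= j) la -> ncells la j = sumn la.
Proof.
elim: la => [|a la IHla]; first by rewrite /ncells big_nil.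
by move=> /= /andP[le_aj /IHla IH]; rewrite ncells_cons IH; lia.
Qed.

Lemma ncells1 la : all (fun p => 0 < p) la -> ncells la 1 = size la.
Proof.
elim: la => [|a la IHla]; first by rewrite /ncells big_nil.
by move=> /= /andP[a_gt0 /IHla IH]; rewrite ncells_cons IH; lia.
Qed.

Lemma b_of1 la : all (fun p => 0 < p) la -> b_of la 1 = size la.
Proof. by move=> la_gt0; rewrite b_ofE ncells1 // subn1. Qed.

Lemma partition_cons2 la n : is_partition la n -> 2 <= nth 0 la 1 ->
  exists a1 a2 rest, [/\ la = [:: a1, a2 & rest], a2 <= a1,
    all (fun p => p <= a2) rest, all (fun p => 0 < p) rest & n = a1 + a2 + sumn rest].
Proof.
case: la => [|a1 [|a2 rest]] //= /and3P[sorted_la la_gt0 /eqP <-] a2_ge2.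
exists a1, a2, rest; move: sorted_la la_gt0 => /= /andP[le_a21 sorted_rest] /and3P[_ _ rest_gt0].
split=> //; last by rewrite addnA.
by move: sorted_rest; rewrite path_sortedE; [case/andP | move=> x y z /=; lia].
Qed.

Lemma conjp_gt1 la n k : is_partition la n -> 1 < conjp la k -> k <= nth 0 la 1.
Proof.
case: la => [|a1 [|a2 rest]] //=; first by rewrite /conjp /=; case: (k <= a1).
move=> /and3P[/= /andP[_ sorted_rest] _ _]; have [//|lt_a2k] := leqP k a2.
have rest_lt : all (fun p => p < k) rest.
  move: sorted_rest; rewrite path_sortedE; last by move=> x y z /=; lia.
  by case/andP => /allP le_rest _; apply/allP => p /le_rest /=; lia.
have count_rest : count (fun j => k <= j) rest = 0.
  rewrite (@eq_in_count _ _ pred0) ?count_pred0 // => p /(allP rest_lt) /=.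
  by rewrite ltnNge => /negbTE.
by rewrite /conjp /= count_rest; case: (k <= a1).
Qed.

End Partitions.

Section DeConciniProcesi.
Local Open Scope nat_scope.
Variables (n a1 a2 : nat) (rest : seq nat).
Hypotheses (a2_gt0 : 0 < a2) (a2_le_a1 : a2 <= a1).
Hypotheses (rest_le_a2 : all (fun p => p <= a2) rest) (rest_gt0 : all (fun p => 0 < p) rest).
Hypothesis n_sum : n = a1 + a2 + sumn rest.
Local Notation la := [:: a1, a2 & rest].

Let ncells_la j : ncells la j = minn a1 j + minn a2 j + ncells rest j.
Proof. by rewrite !ncells_cons addnA. Qed.

Let ncells_rest j :
  ncells rest j <= sumn rest /\ (a2 <= j -> ncells rest j = sumn rest).
Proof.
split=> [|le_a2j]; first exact: ncells_le_sumn.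
by apply: ncells_sumn; apply/allP => p /(allP rest_le_a2) /=; lia.
Qed.

Lemma b_of_le_cols j : j < a1 -> b_of la j <= n - j.
Proof. by rewrite b_ofE ncells_la; have [? _] := ncells_rest j; lia. Qed.

Lemma b_of_large j : a1 <= j <= n -> n - j < b_of la j.
Proof. by move=> ?; rewrite b_ofE ncells_la (proj2 (ncells_rest j)); lia. Qed.

Lemma b_of_flat j : a2 <= j <= a1 -> b_of la j = n - (a1 - 1).
Proof. by move=> ?; rewrite b_ofE ncells_la (proj2 (ncells_rest j)); lia. Qed.

Lemma b_of_mono j : j < a2 -> b_of la j <= b_of la j.+1.
Proof. by rewrite !b_ofE !ncells_la ncellsS /=; lia. Qed.

Lemma size_le_sumn : size la + (a2 - 1) <= n.
Proof. by rewrite n_sum /= -(ncells1 rest_gt0); have [? _] := ncells_rest 1; lia. Qed.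

Lemma delta_ltE m r : m <= n -> (m < r + delta la n m) = (b_of la (n - m) <= r).
Proof.
move=> le_mn; have ncells_n : ncells la n = n.
  by rewrite ncells_la (proj2 (ncells_rest n)); lia.
have := sum_conjp la n; rewrite (@big_cat_nat _ _ _ (n - m).+1) //; last by lia.
rewrite sum_conjp ncells_n -/(delta la n m) b_ofE => split_n.
change (ncells la (n - m) + delta la n m = n) in split_n.
by apply/idP/idP; lia.
Qed.


Lemma Gfam_DPgen (F : fieldType) keep (p : {mpoly F[n]}) :
  Gfam F n la keep p -> DPgen F n la p.
Proof.
have lt_a1n : a1 - 1 < a1 <= n by lia.
case=> [[r [r_bound ->]]|[[j [S [j_bound cS _ ->]]]|[lt_ts [S [cS _ ->]]]]].
- have lt_rn : r < n by move: size_le_sumn; lia.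
  exists n, r, [set: 'I_n]; split; rewrite ?cardsT ?card_ord ?delta_ltE ?subnn ?b_of0 //; lia.
- have lt_ja1 : j < a1 by move: j_bound; rewrite /t_of /=; lia.
  exists (n - j), (b_of la j), S; split; rewrite ?delta_ltE ?subKn //; try lia.
  exact: b_of_le_cols.
- exists (n - (a1 - 1)), (n - (a1 - 1)), S; split=> //; first lia.
  by rewrite delta_ltE ?subKn ?b_of_flat //; move: lt_ts; rewrite /t_of /s_of /=; lia.
Qed.

Variables (F : fieldType) (k : nat).
Hypotheses (charF : [pchar F] =i pred0) (k_ge2 : 2 <= k) (k_le_a2 : k <= a2).
Hypothesis k_col : k <= t_of la \/ k = s_of la /\ t_of la < s_of la.
Local Notation e := (Defs.esym F n).
Local Notation Gred := (Gred F n la k).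
Local Notation J := (in_ideal F n Gred).

Lemma Gred_family j (S : {set 'I_n}) :
  1 <= j <= t_of la \/ j = s_of la /\ t_of la < s_of la ->
  #|S| = n - j -> ~~ ((j == k) && removed n k S) -> J (e S (b_of la j)).
Proof.
move=> [j_bound|[-> lt_ts]] cS keepS; apply: in_ideal_gen; right.
  by left; exists j, S.
right; split=> //; exists S; split=> //.
by rewrite b_of_flat //; move: lt_ts; rewrite /t_of /s_of /=; lia.
Qed.

Lemma esym_level_col j : 1 <= j < n ->
  (forall r, b_of la j.-1 <= r -> esym_level Gred j.-1 r) ->
  esym_level Gred j (b_of la j).
Proof.
move=> j_bound level_prev.
have [le_a1j|lt_ja1] := leqP a1 j.
  by move=> S cS; rewrite esym_card_lt ?cS ?b_of_large //; [apply: in_ideal0 | lia].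
have [ejk|jk] := eqVneq j k.
  subst j; apply: esym_level_recover => //; first lia.
    by apply: level_prev; rewrite -{2}(prednK (ltnW k_ge2)) b_of_mono //; lia.
  move=> S cS removedS; apply: Gred_family => //; last by rewrite eqxx.
  by case: k_col => [?|?]; [left; lia | right].
have [lt_ja2|le_a2j] := ltnP j a2.
  by move=> S cS; apply: Gred_family; rewrite ?(negbTE jk) //; left; rewrite /t_of /=; lia.
rewrite b_of_flat ?le_a2j 1?ltnW //.
apply: (esym_level_down charF (s := a1 - 1)); [lia | lia | | lia].
move=> S cS; rewrite -(@b_of_flat (a1 - 1)); last lia.
apply: Gred_family => //; first by right; rewrite /t_of /s_of /=; split=> //; lia.
by apply/nandP; left; apply/eqP; lia.
Qed.

Lemma esym_level_b_of j : j < n ->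
  forall r, b_of la j <= r -> esym_level Gred j r.
Proof.
elim: j => [|j IHj] lt_jn.
  rewrite b_of0; apply: (esym_level_top charF (l := size la)).
  - by move: size_le_sumn; rewrite /=; lia.
  - by move=> r r_bound; apply: in_ideal_gen; left; exists r.
  - rewrite -b_of1 //=; last by rewrite rest_gt0 andbT; apply/andP; split; lia.
    move=> S cS; apply: Gred_family => //; first by left; rewrite /t_of /=; lia.
    by apply/nandP; left; apply/eqP; lia.
apply: (esym_level_succ_ge _ (IHj (ltnW lt_jn))).
- exact: ltnW.
- by apply: esym_level_col => [|r le_r]; [lia | apply: IHj le_r; lia].
- exact: b_of_succ.
Qed.

Lemma DPgen_in_Gred p : DPgen F n la p -> J p.
Proof.
move=> [m [r [S [m_bound cS _ lt_m ->]]]].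
apply: (esym_level_b_of (j := n - m)); [lia | | by rewrite cS subKn //; lia].
by rewrite -delta_ltE //; lia.
Qed.

End DeConciniProcesi.

Theorem mainTheorem6 (F : fieldType) (charF0 : [pchar F]%R =i pred0)
  (n : nat) (la : seq nat) (k : nat) :
  is_partition la n ->
  (2 <= k)%N ->
  ((k <= t_of la)%N \/ (k = s_of la /\ (t_of la < s_of la)%N)) ->
  (1 < conjp la k)%N ->
  forall p : {mpoly F[n]}, in_ideal F n (Gred F n la k) p <-> in_ideal F n (DPgen F n la) p.
Proof.
move=> la_part k_ge2 k_col conj_k p.
have k_le_la2 := conjp_gt1 la_part conj_k.
have [a1 [a2 [rest [eq_la a2_le_a1 rest_le_a2 rest_gt0 n_sum]]]] :=
  partition_cons2 la_part (leq_trans k_ge2 k_le_la2).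
subst la; have a2_gt0 : (0 < a2)%N by apply: leq_trans k_le_la2; apply: ltnW.
split; apply: in_ideal_sub => g.
  by move=> /(Gfam_DPgen a2_gt0 a2_le_a1 rest_le_a2 rest_gt0 n_sum); apply: in_ideal_gen.
exact: DPgen_in_Gred.
Qed.
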